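(* Let $0\le q\in L_1^{loc}(\mathbb{R})$ and assume there is $a\in(0,\infty)$ with $\inf_{x\in\mathbb{R}}\int_{x-a}^{x+a}q(t)\,dt>0$. Suppose there exist $\alpha\ge1$, $\beta>0$, $X>0$ such that for all $|x|\ge X$, $\frac1\alpha\le\frac{d(t)}{d(x)}\le\alpha$ whenever $|t-x|\le\beta$. Then for each $s\in(0,\infty)$ there is $c(s)\in(0,\infty)$ such that $$J_s(x):=\int_x^\infty\exp\Big(-s\int_x^t q(\xi)\,d\xi\Big)dt\le c(s)\,d(x),\quad x\in\mathbb{R}.$$
   Context: $d(x)=\inf\{d>0:\int_{x-d}^{x+d}q(t)\,dt=2\}$ for $x\in\mathbb{R}$. *)

From HB Require Import structures.
From mathcomp Require Import all_boot all_order all_algebra.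
From mathcomp Require Import all_classical all_reals all_analysis.
Set Implicit Arguments. Unset Strict Implicit. Unset Printing Implicit Defensive.
Import Order.TTheory GRing.Theory Num.Theory.
Import numFieldNormedType.Exports.
Local Open Scope classical_set_scope.
Local Open Scope ring_scope.

Definition dfun (R : realType) (q : R -> R) (x : R) : R :=
  inf [set d : R | 0 < d /\
        (\int[lebesgue_measure]_(t in `[(x - d)%R, (x + d)%R]) (q t)%:E = 2%:E)%E].

Definition Jfun (R : realType) (q : R -> R) (s x : R) : \bar R :=
  (\int[lebesgue_measure]_(t in `[x, +oo[)
     (expR (- (s * \int[lebesgue_measure]_(xi in `[x, t]) q xi)%R))%:E)%E.

From HB Require Import structures.
From mathcomp Require Import all_boot all_order all_algebra.
From mathcomp Require Import all_classical all_reals all_analysis.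
From mathcomp Require Import ring lra measurable_realfun.
Set Implicit Arguments. Unset Strict Implicit. Unset Printing Implicit Defensive.
Import Order.TTheory GRing.Theory Num.Theory.
Import numFieldNormedType.Exports.
Local Open Scope classical_set_scope.
Local Open Scope ring_scope.

(* Write Q(x, t) for the integral of q over [x, t].  Chaining windows of radius
   h that each carry mass at least v gives Q(x, t) >= v ((t - x) / (2 h) - 1),
   so exp(- s Q(x, t)) decays exponentially in t.  The windows of radius a given
   by the hypothesis thus bound J_s by a constant, which suffices on compact
   sets, where local integrability keeps d bounded below.  Far out, regularity
   of d makes every window of radius r = 2 alpha d(x) centred within beta of x
   carry mass 2; this gives decay at rate s / r on [x, x + beta], after which
   the global rate takes over with a factor exp(- s beta / r) <= r / (s beta).
   Hence J_s(x) = O(r) = O(d(x)). *)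

Section q_integral.
Context {R : realType} (q : R -> R).
Hypothesis q_ge0 : forall t, 0 <= q t.
Hypothesis q_loc : locally_integrable setT q.
Local Notation mu := (@lebesgue_measure R).

Definition qint (a b : R) : R := \int[mu]_(t in `[a, b]) q t.

Lemma integrable_q (a b : R) : mu.-integrable `[a, b] (EFin \o q).
Proof.
case: q_loc => mq _ q_cpt; apply/integrableP; split.
  by apply/measurable_EFinP; exact: measurable_funS mq.
exact: q_cpt (@segment_compact _ a b).
Qed.

Lemma EFin_qint (a b : R) :
  (\int[mu]_(t in `[a, b]) (q t)%:E)%E = (qint a b)%:E.
Proof.
by rewrite /qint /Rintegral fineK //; exact: integrable_fin_num (integrable_q a b).
Qed.

Lemma qint_ge0 (a b : R) : 0 <= qint a b.
Proof. exact: Rintegral_ge0. Qed.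

Lemma qint_ge (a b : R) : b <= a -> qint a b = 0.
Proof.
rewrite le_eqVlt => /predU1P[->|ba]; first by rewrite /qint set_itv1 Rintegral_set1.
by rewrite /qint set_itv_ge ?Rintegral_set0 // bnd_simp -ltNge.
Qed.

Lemma qint_split (a b c : R) : a <= b -> b <= c -> qint a c = qint a b + qint b c.
Proof.
move=> ab bc.
have := @Rintegral_itvB R q (BLeft a) (BRight c) b (integrable_q a c).
rewrite !bnd_simp => /(_ ab bc) ab_bc.
rewrite /qint -[X in _ = _ + X]Rintegral_itv_obnd_cbnd; first by rewrite -ab_bc addrC subrK.
by apply: integrableS (integrable_q a c) => //; apply: subset_itv; rewrite bnd_simp.
Qed.

Lemma le_qint (a b c d : R) : a <= c -> d <= b -> qint c d <= qint a b.
Proof.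
move=> ac db; have [cd|dc] := leP c d; last by rewrite qint_ge ?qint_ge0 ?ltW.
rewrite (qint_split ac (le_trans cd db)) (qint_split cd db).
by rewrite addrCA lerDl addr_ge0 ?qint_ge0.
Qed.

Lemma qint_small (a b e : R) : 0 < e -> exists2 del : R, 0 < del &
  forall c d, a <= c -> d <= b -> d - c < del -> qint c d < e.
Proof.
move=> e0.
have int_ab : mu.-integrable setT (EFin \o (q \_ `[a, b])).
  rewrite -restrict_EFin; apply/integrable_restrict => //=.
  by rewrite setTI; exact: integrable_q.
have [del [del0 small]] := integral_normr_continuous int_ab e0.
exists del => // c d ac db dc.
have [cd|dc'] := ltP c d; last by rewrite qint_ge.
have := small `[c, d]%classic (measurable_itv _).
rewrite [X in (X < _)%E -> _]lebesgue_measure_itv/= lte_fin cd -EFinD lte_fin => /(_ dc).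
congr (_ < _); apply: eq_Rintegral => y; rewrite inE/= in_itv/= => /andP[cy yd].
by rewrite patchE ifT ?ger0_norm // inE/= in_itv/= (le_trans ac cy) (le_trans yd db).
Qed.

Definition dset (x : R) : set R := [set d | 0 < d /\ qint (x - d) (x + d) = 2].

Lemma dfunE (x : R) : dfun q x = inf (dset x).
Proof.
rewrite /dfun; congr inf; apply/seteqP; split=> d [d0 qd]; split=> //.
  by move: qd; rewrite EFin_qint => -[].
by rewrite EFin_qint qd.
Qed.

Lemma qint_sym_dist (x u u' : R) : 0 <= u -> u <= u' ->
  `|qint (x - u) (x + u) - qint (x - u') (x + u')| =
    qint (x - u') (x - u) + qint (x + u) (x + u').
Proof.
move=> u0 uu'.
have le1 : x - u' <= x - u by rewrite lerD2l lerN2.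
have le2 : x - u <= x + u by lra.
have le3 : x + u <= x + u' by rewrite lerD2l.
rewrite (qint_split le1 (le_trans le2 le3)) (qint_split le2 le3) distrC.
by rewrite addrCA addrC addrK ger0_norm // addr_ge0 ?qint_ge0.
Qed.

Lemma continuous_qint_sym (x : R) :
  continuous (fun r : R => qint (x - `|r|) (x + `|r|)).
Proof.
move=> r0; apply/(@cvgrPdist_lt _ R^o) => e e0.
have [del del0 small] :=
  qint_small (x - (`|r0| + 1)) (x + (`|r0| + 1)) (divr_gt0 e0 (ltr0Sn _ 1)).
have close u u' : 0 <= u -> u <= u' -> u' <= `|r0| + 1 -> u' - u < del ->
    `|qint (x - u) (x + u) - qint (x - u') (x + u')| < e.
  move=> u0 uu' u'r0 u'u; rewrite qint_sym_dist // (splitr e).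
  by apply: ltrD; apply: small; lra.
have near0 : 0 < Num.min del 1 by rewrite lt_min del0 ltr01.
near=> t.
have : ball r0 (Num.min del 1) t by near: t; exact: (@near_ball _ R^o r0 _ near0).
rewrite /ball /= lt_min => /andP[tdel t1].
have := ler_dist_dist r0 t; rewrite ler_norml => /andP[ge_t le_t].
have r0_ge0 := normr_ge0 r0; have t_ge0 := normr_ge0 t.
have [r0t|tr0] := leP `|r0| `|t|; first by apply: close; lra.
by rewrite distrC; apply: close; lra.
Unshelve. all: by end_near. Qed.

Lemma qint_ge_windows (x h v W : R) : 0 < h -> 0 <= v ->
  (forall c, x <= c - h -> c + h <= x + W -> v <= qint (c - h) (c + h)) ->
  forall t, x <= t -> t <= x + W -> v * ((t - x) / (2 * h) - 1) <= qint x t.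
Proof.
move=> h0 v0 window.
have h20 : 0 < 2 * h by rewrite mulr_gt0.
have blocks (n : nat) : n%:R * (2 * h) <= W -> n%:R * v <= qint x (x + n%:R * (2 * h)).
  elim: n => [|n IH] nW; first by rewrite mul0r qint_ge0.
  set y := x + n%:R * (2 * h).
  have yE : x + n.+1%:R * (2 * h) = y + h + h by rewrite /y -natr1; ring.
  have n_ge0 : 0 <= n%:R * (2 * h) by rewrite mulr_ge0 // ltW.
  have nW' : n%:R * (2 * h) <= W by move: nW; rewrite -natr1; lra.
  rewrite yE (@qint_split _ y); [|lra|lra].
  rewrite -natr1 mulrDl mul1r; apply: lerD; first exact: IH.
  by have := window (y + h); rewrite addrK; apply; lra.
move=> t xt tW.
have tx_ge0 : 0 <= (t - x) / (2 * h) by rewrite divr_ge0 ?subr_ge0 // ltW.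
set n := Num.truncn ((t - x) / (2 * h)).
have n_le : n%:R <= (t - x) / (2 * h) by rewrite truncn_le tx_ge0.
have n_gt : (t - x) / (2 * h) < n.+1%:R := truncnS_gt _.
have nt : n%:R * (2 * h) <= t - x by rewrite -ler_pdivlMr.
apply: le_trans (le_qint (lexx x) (_ : x + n%:R * (2 * h) <= t)); last by lra.
apply: le_trans (blocks n (le_trans nt _)); last by lra.
by rewrite mulrC ler_wpM2r // lerBlDr natr1; exact: ltW.
Qed.

End q_integral.

Section exp_decay.
Context {R : realType}.
Local Notation mu := (@lebesgue_measure R).

Lemma continuous_expR_decay (A l x : R) :
  continuous (fun t : R => A * expR (- (l * (t - x)))).
Proof.
have df t : derivable (fun t : R => A * expR (- (l * (t - x)))) t 1 by exact: ex_derive.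
by move=> t; apply: differentiable_continuous; apply/derivable1_diffP.
Qed.

Lemma integral_expR_decay (A l x : R) : 0 <= A -> 0 < l ->
  (\int[mu]_(t in `[x, +oo[) (A * expR (- (l * (t - x))))%:E = (A / l)%:E)%E.
Proof.
move=> A0 l0.
pose F t := - (A / l) * expR (- (l * (t - x))).
have dF (t : R) : is_derive t (1 : R) F (A * expR (- (l * (t - x)))).
  apply: is_derive_eq; rewrite subr0 /GRing.scale /= mulr1.
  by field; rewrite gt_eqF.
rewrite (@ge0_continuous_FTC2y _ _ F x 0).
- by rewrite /F subrr mulr0 oppr0 expR0 mulr1 sub0e EFinN oppeK.
- by move=> t _; rewrite mulr_ge0 // expR_ge0.
- exact/continuous_subspaceT/continuous_expR_decay.
- rewrite -(mulr0 (- (A / l))); apply: cvgM; first exact: cvg_cst.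
  have ltx : (l * (t - x)) @[t --> +oo] --> +oo by exact/gt0_cvgMry/cvg_addrr.
  exact: (cvg_comp _ _ ltx (@cvgr_expR R)).
- by move=> t _; exact: ex_derive.
- apply/cvg_at_right_filter/differentiable_continuous/derivable1_diffP.
  by case: (dF x).
- by move=> t _; rewrite derive1E; exact: derive_val.
Qed.

Lemma expRN_le_inv (u : R) : 0 < u -> expR (- u) <= u^-1.
Proof.
move=> u0; rewrite expRN lef_pV2 ?posrE ?expR_gt0 //.
by have := expR_ge1Dx u; lra.
Qed.

End exp_decay.

Section Jfun_comparison.
Context {R : realType} (q : R -> R).
Hypothesis q_ge0 : forall t, 0 <= q t.
Hypothesis q_loc : locally_integrable setT q.
Local Notation mu := (@lebesgue_measure R).
Variable s : R.

Lemma measurable_Jfun_integrand (x : R) :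
  measurable_fun `[x, +oo[ (EFin \o (fun t => expR (- (s * qint q x t)))).
Proof.
apply/measurable_EFinP.
apply: (@measurableT_comp _ _ _ _ _ _ (fun u : R => expR (- (s * u)))).
  apply: continuous_measurable_fun => u.
  have df : derivable (fun u : R => expR (- (s * u))) u 1 by exact: ex_derive.
  by apply: differentiable_continuous; apply/derivable1_diffP.
apply: nondecreasing_measurable => // u v uv.
exact: le_qint q_ge0 q_loc _ _ _ _ (lexx x) uv.
Qed.

Lemma Jfun_le_integral (x : R) (g : R -> R) : measurable_fun `[x, +oo[ g ->
  (forall t, x <= t -> expR (- (s * qint q x t)) <= g t) ->
  (Jfun q s x <= \int[mu]_(t in `[x, +oo[) (g t)%:E)%E.
Proof.
move=> mg Jg; apply: ge0_le_integral => //.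
- exact: measurable_Jfun_integrand.
- exact/measurable_EFinP.
- by move=> t; rewrite /= in_itv/= andbT => xt; rewrite lee_fin Jg.
Qed.

Lemma measurable_expR_decay (A l x : R) :
  measurable_fun `[x, +oo[ (fun t : R => A * expR (- (l * (t - x)))).
Proof.
by apply: measurable_funTS; apply: continuous_measurable_fun; exact: continuous_expR_decay.
Qed.

Lemma Jfun_le_expR_decay (x A l : R) : 0 <= A -> 0 < l ->
  (forall t, x <= t -> expR (- (s * qint q x t)) <= A * expR (- (l * (t - x)))) ->
  (Jfun q s x <= (A / l)%:E)%E.
Proof.
move=> A0 l0 Jg; rewrite -(integral_expR_decay x A0 l0).
by apply: Jfun_le_integral Jg; exact: measurable_expR_decay.
Qed.

Lemma Jfun_le_expR_decay2 (x A1 l1 A2 l2 : R) :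
  0 <= A1 -> 0 < l1 -> 0 <= A2 -> 0 < l2 ->
  (forall t, x <= t -> expR (- (s * qint q x t)) <=
      A1 * expR (- (l1 * (t - x))) + A2 * expR (- (l2 * (t - x)))) ->
  (Jfun q s x <= (A1 / l1 + A2 / l2)%:E)%E.
Proof.
move=> A10 l10 A20 l20 Jg.
have decay_ge0 A l t : 0 <= A -> (0 <= (A * expR (- (l * (t - x))))%:E)%E.
  by move=> A0; rewrite lee_fin mulr_ge0 ?expR_ge0.
rewrite EFinD -(integral_expR_decay x A10 l10) -(integral_expR_decay x A20 l20).
rewrite -ge0_integralD //; last 4 first.
- by move=> t _; exact: decay_ge0.
- by apply/measurable_EFinP; exact: measurable_expR_decay.
- by move=> t _; exact: decay_ge0.
- by apply/measurable_EFinP; exact: measurable_expR_decay.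
under eq_integral do rewrite -EFinD.
apply: Jfun_le_integral Jg.
by apply: measurable_funD; exact: measurable_expR_decay.
Qed.

End Jfun_comparison.

Section uniform_window.
Context {R : realType} (q : R -> R).
Hypothesis q_ge0 : forall t, 0 <= q t.
Hypothesis q_loc : locally_integrable setT q.
Variables (a m : R).
Hypotheses (a_gt0 : 0 < a) (m_gt0 : 0 < m).
Hypothesis qint_window : forall y, m <= qint q (y - a) (y + a).

Lemma qint_ge_linear (x t : R) : x <= t -> m * ((t - x) / (2 * a) - 1) <= qint q x t.
Proof.
move=> xt; apply: (qint_ge_windows q_ge0 q_loc (W := t - x) a_gt0 (ltW m_gt0)
  (fun c _ _ => qint_window c) xt); lra.
Qed.

Lemma dset_neq0 (x : R) : dset q x !=set0.
Proof.
(* the radius at which the linear lower bound reaches 2 *)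
pose r := a * (2 / m + 1).
have r0 : 0 < r by rewrite mulr_gt0 // addr_gt0 // divr_gt0.
have ge2 : 2 <= qint q (x - r) (x + r).
  have := qint_ge_linear (_ : x - r <= x + r).
  have -> : m * ((x + r - (x - r)) / (2 * a) - 1) = 2.
    by rewrite /r; field; rewrite !gt_eqF.
  by apply; lra.
pose f (r : R) := qint q (x - `|r|) (x + `|r|).
have f0 : f 0 = 0 by rewrite /f normr0 subr0 addr0 qint_ge.
have [c] : exists2 c, c \in `[0, r] & f c = 2.
  apply: IVT (ltW r0) (continuous_subspaceT (continuous_qint_sym q_ge0 q_loc (x := x))) _.
  rewrite normr0 subr0 addr0 qint_ge // gtr0_norm //.
  by rewrite (min_idPl (qint_ge0 q_ge0 _ _)) (max_idPr (qint_ge0 q_ge0 _ _)) ge2 ler0n.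
rewrite in_itv/= => /andP[c0 _] fc.
exists c; rewrite /dset/=; split; last by rewrite -fc /f ger0_norm.
rewrite lt_neqAle c0 andbT; apply/eqP => c_eq0.
by move: fc; rewrite -c_eq0 f0 => /eqP; rewrite eq_sym pnatr_eq0.
Qed.

Lemma dfun_lt_qint (x r : R) : dfun q x < r -> 2 <= qint q (x - r) (x + r).
Proof.
rewrite dfunE // => /(inf_lt (dset_neq0 x))[d [d0 <-] dr].
by apply: (le_qint q_ge0 q_loc); lra.
Qed.

Lemma dfun_ge_compact (X : R) :
  exists2 del, 0 < del & forall x, `|x| <= X -> del <= dfun q x.
Proof.
have [e e0 small] := qint_small q_ge0 q_loc (- X - 1) (X + 1) (ltr0Sn _ 1).
exists (Num.min (e / 2) 1); first by rewrite lt_min ltr01 divr_gt0.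
move=> x; rewrite ler_norml => /andP[Xx xX].
rewrite dfunE //; apply: lb_le_inf; first exact: dset_neq0.
move=> d [d0 qd].
rewrite leNgt lt_min; apply/negP => /andP[de d1].
have : qint q (x - d) (x + d) < 2 by apply: small; lra.
by rewrite qd ltxx.
Qed.

Lemma dfun_gt0 (x : R) : 0 < dfun q x.
Proof.
have [del del0 /(_ x (lexx _))] := dfun_ge_compact `|x|.
exact: lt_le_trans.
Qed.

Variable s : R.
Hypothesis s_gt0 : 0 < s.

Lemma Jfun_bounded : exists2 C, 0 < C & forall x, (Jfun q s x <= C%:E)%E.
Proof.
have l0 : 0 < s * m / (2 * a) by rewrite !mulr_gt0 ?invr_gt0 ?mulr_gt0.
exists (expR (s * m) / (s * m / (2 * a))); first by rewrite divr_gt0 ?expR_gt0.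
move=> x; apply: (Jfun_le_expR_decay q_ge0 q_loc (expR_ge0 _) l0) => t xt.
rewrite -expRD ler_expR.
have := qint_ge_linear xt; rewrite -(ler_pM2l s_gt0); lra.
Qed.

Lemma Jfun_le_scale (beta : R) : 0 < beta -> exists2 c, 0 < c &
  forall x r, 0 < r -> (forall y, `|y - x| <= beta -> 2 <= qint q (y - r) (y + r)) ->
  (Jfun q s x <= (c * r)%:E)%E.
Proof.
move=> beta0.
pose l := s * m / (2 * a).
have l0 : 0 < l by rewrite !mulr_gt0 ?invr_gt0 ?mulr_gt0.
pose K := expR (2 * s + s * m + l * beta).
have K0 : 0 < K by exact: expR_gt0.
exists (expR (2 * s) / s + K / (l * (s * beta))).
  by rewrite addr_gt0 ?divr_gt0 ?expR_gt0 // (mulr_gt0 l0 (mulr_gt0 s_gt0 beta0)).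
move=> x r r0 window.
have local t : x <= t -> t <= x + beta -> 2 * ((t - x) / (2 * r) - 1) <= qint q x t.
  move=> xt tb; apply: (qint_ge_windows q_ge0 q_loc r0 _ _ xt tb) => // y xy yb.
  by apply: window; rewrite ler_norml; lra.
have decay t : x <= t -> expR (- (s * qint q x t)) <=
    expR (2 * s) * expR (- (s / r * (t - x))) +
    K * expR (- (s * beta / r)) * expR (- (l * (t - x))).
  move=> xt; have [tb|bt] := leP t (x + beta).
  - rewrite -[leLHS]addr0; apply: lerD; last by rewrite !mulr_ge0 ?expR_ge0.
    rewrite -expRD ler_expR.
    have := local t xt tb; rewrite -(ler_pM2l s_gt0) invfM; lra.
  - rewrite -[leLHS]add0r; apply: lerD; first by rewrite mulr_ge0 ?expR_ge0.
    have xb : x <= x + beta by lra.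
    have bt' : x + beta <= t by lra.
    rewrite /K -!expRD ler_expR (qint_split q_loc xb bt').
    have := local _ xb (lexx _); rewrite -(ler_pM2l s_gt0) invfM => first_part.
    have := qint_ge_linear bt'; rewrite -(ler_pM2l s_gt0) => second_part.
    rewrite /l; lra.
apply: le_trans (Jfun_le_expR_decay2 q_ge0 q_loc (expR_ge0 _) (divr_gt0 s_gt0 r0)
  (mulr_ge0 (expR_ge0 _) (expR_ge0 _)) l0 decay) _.
rewrite lee_fin [leRHS]mulrDl; apply: lerD; first by rewrite invf_div mulrA mulrAC.
have decay_le : expR (- (s * beta / r)) <= r / (s * beta).
  by rewrite -[r / _]invf_div; apply: expRN_le_inv; rewrite divr_gt0 ?mulr_gt0.
apply: (@le_trans _ _ (K * (r / (s * beta)) / l)).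
  by rewrite ler_pM2r ?invr_gt0 // ler_pM2l ?expR_gt0.
rewrite [leRHS](_ : _ = K * (r / (s * beta)) / l) //.
by field; rewrite !gt_eqF.
Qed.

End uniform_window.

Theorem lemma4p4 (R : realType) (q : R -> R)
  (q_ge0 : forall t, 0 <= q t)
  (q_loc : locally_integrable setT q)
  (q_inf : exists a : R, 0 < a /\
     0 < inf (range (fun x : R =>
            \int[lebesgue_measure]_(t in `[x - a, x + a]) q t)))
  (d_reg : exists alpha beta X : R, 1 <= alpha /\ 0 < beta /\ 0 < X /\
     forall x t : R, X <= `|x| -> `|t - x| <= beta ->
       alpha^-1 <= dfun q t / dfun q x <= alpha) :
  forall s : R, 0 < s ->
    exists c : R, 0 < c /\
      forall x : R, (Jfun q s x <= (c * dfun q x)%:E)%E.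
Proof.
move=> s s_gt0.
have [a [a_gt0]] := q_inf; set m := inf _ => m_gt0.
have window y : m <= qint q (y - a) (y + a).
  by apply: ge_inf; [exists 0 => _ [z _ <-]; exact: qint_ge0 | exists y].
have [alpha [beta [X [alpha_ge1 [beta_gt0 [_ d_ratio]]]]]] := d_reg.
have [C C_gt0 J_le_C] := Jfun_bounded q_ge0 q_loc a_gt0 m_gt0 window s_gt0.
have [del del_gt0 d_ge_del] := dfun_ge_compact q_ge0 q_loc a_gt0 m_gt0 window X.
have [c c_gt0 J_le_scale] := Jfun_le_scale q_ge0 q_loc a_gt0 m_gt0 window s_gt0 beta_gt0.
have alpha_gt0 : 0 < alpha by lra.
exists (C / del + c * (2 * alpha)); split=> [|x].
  by rewrite addr_gt0 ?divr_gt0 ?mulr_gt0.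
have dx_gt0 := dfun_gt0 q_ge0 q_loc a_gt0 m_gt0 window x.
have adx_gt0 := mulr_gt0 alpha_gt0 dx_gt0.
have [xX|Xx] := leP `|x| X.
- apply: le_trans (J_le_C x) _; rewrite lee_fin.
  have : C <= C / del * dfun q x by rewrite mulrAC ler_pdivlMr // ler_pM2l // d_ge_del.
  have := mulr_gt0 (mulr_gt0 c_gt0 alpha_gt0) dx_gt0; lra.
- have mass2 y : `|y - x| <= beta ->
      2 <= qint q (y - 2 * alpha * dfun q x) (y + 2 * alpha * dfun q x).
    move=> xy; apply: (dfun_lt_qint q_ge0 q_loc a_gt0 m_gt0 window).
    by have /andP[_] := d_ratio x y (ltW Xx) xy; rewrite ler_pdivrMr //; lra.
  apply: le_trans (J_le_scale x _ _ mass2) _; first by lra.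
  have := mulr_gt0 (divr_gt0 C_gt0 del_gt0) dx_gt0; rewrite lee_fin; lra.
Qed.
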